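(* In the qubit–battery model with the ''copy'' interaction $$U_{SB}=|0\rangle\langle0|_S\otimes|0\rangle\langle0|_B+\sum_{n\ge1}\sum_{i,j\in\{0,1\}}V_{ij}\,|i\rangle\langle j|_S\otimes|n-i\rangle\langle n-j|_B,$$ for every normalized battery state $|\beta\rangle_B=\sum_{n\ge0}\beta_n|n\rangle_B$ one has $$\epsilon_C(\mathbf\Phi_{|\beta\rangle},\mathcal V)=|V_{01}|^2\sum_{n=1}^\infty\Big[|\beta_{n+1}-\beta_n|^2-\frac{|V_{01}|^2}{4}|\beta_{n+1}+\beta_{n-1}-2\beta_n|^2\Big]+\Delta(\beta_0,\beta_1,V_S),$$ where $$\Delta(\beta_0,\beta_1,V_S)=|\beta_0|^2+|V_{01}|^2\big(|\beta_1|^2-\mathrm{Re}[\beta_0\beta_1^*]\big)-\frac14\big|\beta_0(V_{00}^*+|V_{11}|^2)+\beta_1|V_{01}|^2\big|^2 .$$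
   Context: Qubit $S$ with energy basis $|0\rangle_S,|1\rangle_S$, $H_S=\frac\omega2(|1\rangle\langle1|-|0\rangle\langle0|)$; harmonic-oscillator battery $B$ with basis $\{|n\rangle_B\}_{n\ge0}$, $H_B=\omega\sum_n n|n\rangle\langle n|$. $V_S$ is a qubit unitary with entries $V_{ij}=\langle i|V_S|j\rangle$, $\mathcal V(\cdot)=V_S\cdot V_S^\dagger$. The channel is $\mathbf\Phi_{|\beta\rangle}(\rho)=\mathrm{Tr}_B[U_{SB}(\rho\otimes|\beta\rangle\langle\beta|_B)U_{SB}^\dagger]$ with Kraus operators $K^{(n)}={}_B\langle n|U_{SB}|\beta\rangle_B$, and the Choi infidelity is $\epsilon_C(\mathbf\Phi,\mathcal V)=1-\frac14\sum_n|\mathrm{Tr}[V_S^\dagger K^{(n)}]|^2$ (equivalently $1-F$ of the Choi states, $F$ the Uhlmann fidelity). *)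

From HB Require Import structures.
From mathcomp Require Import all_boot all_order all_algebra.
From mathcomp Require Import complex.
From mathcomp Require Import all_classical all_reals all_analysis.
Set Implicit Arguments. Unset Strict Implicit. Unset Printing Implicit Defensive.
Import Order.TTheory GRing.Theory Num.Theory.
Import numFieldNormedType.Exports.
Local Open Scope ring_scope.
Local Open Scope complex_scope.
Local Open Scope classical_set_scope.

Section Defs.
Variable R : realType.
Notation C := R[i].

Definition normsq (z : C) : R := complex.Re z ^+ 2 + complex.Im z ^+ 2.

Definition adjmx (V : 'M[C]_2) : 'M[C]_2 := (map_mx (fun z => z^*) V)^T.

Definition unitary2 (V : 'M[C]_2) : Prop :=
  adjmx V *m V = 1%:M /\ V *m adjmx V = 1%:M.

Definition rseries (m : nat) (u : nat -> R) : R :=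
  limn (fun N => \sum_(m <= k < N) u k).

Definition normalized (beta : nat -> C) : Prop :=
  (fun N => \sum_(0 <= k < N) normsq (beta k)) @ \oo --> (1 : R).

(* Matrix element <i|_S <n|_B U_SB |j>_S |m>_B of the "copy" unitary
   U_SB = |0><0| (x) |0><0| + sum_{k>=1} sum_{i,j} V_ij |i><j| (x) |k-i><k-j|.
   For fixed (i,n) only k = n + i can contribute (k - i = n, i <= 1 <= k),
   so the sum over k >= 1 is written over 1 <= k <= n+1. *)
Definition Ucopy (V : 'M[C]_2) (i : 'I_2) (n : nat) (j : 'I_2) (m : nat) : C :=
  (((i == 0 :> nat) && (j == 0 :> nat) && (n == 0)%N && (m == 0)%N)%:R : C)
  + \sum_(1 <= k < n.+2)
      (if ((n == k - i)%N && (m == k - j)%N) then V i j else 0).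

(* Kraus operator K^(n) = <n|_B U_SB |beta>_B, entries
   K^(n)_{ij} = sum_m <i,n|U|j,m> beta_m. Nonzero terms only have
   m = k - j <= n + 1, so the sum over m is written over m < n+3. *)
Definition kraus (V : 'M[C]_2) (beta : nat -> C) (n : nat) : 'M[C]_2 :=
  \matrix_(i < 2, j < 2) \sum_(m < n.+3) Ucopy V i n j m * beta m.

Definition choi_infidelity (V : 'M[C]_2) (beta : nat -> C) : R :=
  1 - 4^-1 * rseries 0 (fun n => normsq (\tr (adjmx V *m kraus V beta n))).

Definition Delta (V : 'M[C]_2) (b0 b1 : C) : R :=
  normsq b0 + normsq (V 0 1) * (normsq b1 - complex.Re (b0 * b1^*))
  - 4^-1 * normsq (b0 * ((V 0 0)^* + (normsq (V 1 1))%:C)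
                   + b1 * (normsq (V 0 1))%:C).

End Defs.

From HB Require Import structures.
From mathcomp Require Import all_boot all_order all_algebra.
From mathcomp Require Import complex.
From mathcomp Require Import all_classical all_reals all_analysis.
From mathcomp Require Import zify ring lra.
Import Order.TTheory GRing.Theory Num.Theory.
Import numFieldNormedType.Exports.
Local Open Scope ring_scope.
Local Open Scope complex_scope.
Local Open Scope classical_set_scope.

(* Write p = |V01|^2.  Unitarity turns the trace of V^dag K^(n+1) into
   (2 - 2p) b_(n+1) + p (b_n + b_(n+2)) = 2 b_(n+1) + p (second difference of b at n+1),
   so -1/4 of its squared modulus is p times the n-th summand of the series, up to
   terms that telescope.  Hence the partial sums of the Choi infidelity and of the
   right-hand side differ by the boundary remainder
   1 - sum_(k <= N) |b_k|^2 + p (Re (b_N^* b_(N+1)) - |b_(N+1)|^2),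
   which vanishes in the limit because b is normalized, while the n = 0 term
   produces Delta.  The fidelity series converges since its terms are dominated by
   consecutive |b_k|^2, so p times the series converges and the identity passes to
   the limit. *)

Lemma normsq_ge0 {R : realType} (z : R[i]) : 0 <= normsq z.
Proof. by rewrite /normsq addr_ge0 // sqr_ge0. Qed.

Lemma mul_conjC_normsq {R : realType} (z : R[i]) : z^* * z = (normsq z)%:C.
Proof. case: z => a b; rewrite /normsq /=; simpc; congr (_ +i* _); ring. Qed.

Lemma Re_mul_conjC {R : realType} (x y : R[i]) : complex.Re (x * y^*) = complex.Re (x^* * y).
Proof. by case: x => a b; case: y => c d /=; ring. Qed.

Lemma Re_conj_mul_bound {R : realType} (x y : R[i]) :
  - (normsq x + normsq y) <= complex.Re (x^* * y) <= normsq x + normsq y.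
Proof.
case: x => a b; case: y => c d; rewrite /normsq /=.
have := sqr_ge0 (a - c); have := sqr_ge0 (b - d).
have := sqr_ge0 (a + c); have := sqr_ge0 (b + d).
rewrite !sqrrB !sqrrD => h1 h2 h3 h4.
by apply/andP; split; nra.
Qed.

Section KrausTraces.
Variables (R : realType) (V : 'M[R[i]]_2) (beta : nat -> R[i]).

Lemma kraus_entry n i j : kraus V beta n i j =
  ((i == 0 :> nat) && (j == 0 :> nat) && (n == 0)%N)%:R * beta 0%N
  + (if (1 <= n + i)%N then V i j * beta (n + i - j)%N else 0).
Proof.
(* Only the shell k = n + i of U_SB reaches battery level n. *)
have shell (F : nat -> R[i]) : \sum_(1 <= k < n.+2 | (n == k - i)%N) F k
    = if (1 <= n + i)%N then F (n + i)%N else 0.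
  rewrite big_nat_cond (eq_bigl (fun k => (1 <= n + i)%N && (k == n + i)%N)).
    by rewrite big_nat1_cond_eq; congr (if _ then _ else _); have := ltn_ord i; lia.
  by move=> k /=; have := ltn_ord i; lia.
rewrite -(shell (fun k => V i j * beta (k - j)%N)) mxE.
under eq_bigr => m _ do rewrite /Ucopy mulrDl mulr_suml.
rewrite big_split /=; congr (_ + _).
  rewrite big_ord_recl /= big1 ?addr0 ?andbT // => m _.
  by rewrite andbF mul0r.
rewrite exchange_big /= [RHS]big_mkcond /=; apply: eq_big_nat => k /andP[k1 k2].
case: ifP => [/eqP hn|hn]; last by apply: big1 => m _; rewrite /= mul0r.
have kj : (k - j < n.+3)%N by lia.
rewrite (bigD1 (Ordinal kj)) //= eqxx big1 ?addr0 // => m /negPf hm.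
by rewrite -(inj_eq val_inj) /= in hm; rewrite hm mul0r.
Qed.

Lemma mxtrace_adjmx_mul (K : 'M[R[i]]_2) : \tr (adjmx V *m K) =
  (V 0 0)^* * K 0 0 + (V 0 1)^* * K 0 1 + (V 1 0)^* * K 1 0 + (V 1 1)^* * K 1 1.
Proof.
rewrite /mxtrace !big_ord_recl big_ord0 !mxE !big_ord_recl !big_ord0 /adjmx !mxE.
have -> : lift ord0 ord0 = 1 :> 'I_2 by apply: val_inj.
by rewrite !addr0; ring.
Qed.

Lemma trace_kraus0 : \tr (adjmx V *m kraus V beta 0) =
  beta 0%N * ((V 0 0)^* + (normsq (V 1 1))%:C) + beta 1%N * (normsq (V 1 0))%:C.
Proof.
rewrite mxtrace_adjmx_mul !kraus_entry /= -!mul_conjC_normsq.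
by rewrite !mul1r !mul0r !add0r !addr0 mulr0 addr0; ring.
Qed.

Lemma trace_krausS n : \tr (adjmx V *m kraus V beta n.+1) =
  ((normsq (V 0 0))%:C + (normsq (V 1 1))%:C) * beta n.+1
  + (normsq (V 0 1))%:C * beta n + (normsq (V 1 0))%:C * beta n.+2.
Proof.
rewrite mxtrace_adjmx_mul !kraus_entry /= !mul0r !add0r !addn0 !addn1 !subn0 !subn1 /=.
by rewrite -!mul_conjC_normsq; ring.
Qed.

End KrausTraces.

Lemma unitary2_normsq {R : realType} {V : 'M[R[i]]_2} : unitary2 V ->
  [/\ normsq (V 1 0) = normsq (V 0 1),
      normsq (V 0 0) + normsq (V 1 1) = 2 - 2 * normsq (V 0 1)
    & normsq (V 0 1) <= 1].
Proof.
have lift01 : lift ord0 ord0 = 1 :> 'I_2 by apply: val_inj.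
move=> [adjVV VadjV].
have col k : normsq (V 0 k) + normsq (V 1 k) = 1.
  have := congr1 (fun M : 'M[R[i]]_2 => complex.Re (M k k)) adjVV.
  rewrite !mxE !big_ord_recl big_ord0 /adjmx !mxE lift01 !mul_conjC_normsq eqxx.
  by rewrite addr0 mulr1n => /= ->.
have row0 : normsq (V 0 0) + normsq (V 0 1) = 1.
  have := congr1 (fun M : 'M[R[i]]_2 => complex.Re (M 0 0)) VadjV.
  rewrite /= !mxE !big_ord_recl big_ord0 /adjmx !mxE lift01.
  by rewrite ![V 0 _ * _]mulrC !mul_conjC_normsq addr0 mulr1n => /= ->.
have := col 0; have := col 1; have := normsq_ge0 (V 0 0).
by split; lra.
Qed.

Lemma limn_scale {R : realType} (p l : R) (q : nat -> R) :
  (fun n => p * q n) @ \oo --> l -> p * limn q = l.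
Proof.
have [-> | p_neq0] := eqVneq p 0.
  under eq_fun do rewrite mul0r.
  by move/cvg_lim => <- //; rewrite mul0r lim_cst.
move=> pq_cvg; have q_cvg : q @ \oo --> p^-1 * l.
  rewrite (_ : q = fun n => p^-1 * (p * q n)); first exact: cvgM (cvg_cst _) pq_cvg.
  by apply/funext => n; rewrite mulKf.
by rewrite (cvg_lim _ q_cvg) // mulrA divff // mul1r.
Qed.

Section Normalized.
Context {R : realType} {beta : nat -> R[i]}.
Hypothesis beta_normalized : normalized beta.

Lemma normalized_partial_sum_le1 N : \sum_(0 <= k < N) normsq (beta k) <= 1.
Proof.
have <- : limn (fun N => \sum_(0 <= k < N) normsq (beta k)) = 1.
  exact: cvg_lim beta_normalized.
apply: nondecreasing_cvgn_le; last exact: cvgP beta_normalized.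
by apply: nondecreasing_series => n _ _; exact: normsq_ge0.
Qed.

Lemma normalized_cvg0 : (fun n => normsq (beta n)) @ \oo --> 0.
Proof. by apply: cvg_series_cvg_0; exact: cvgP beta_normalized. Qed.

End Normalized.

Lemma normsq_trace_step {R : realType} (p : R) (a b c : R[i]) :
  - 4^-1 * normsq ((2 - 2 * p)%:C * b + p%:C * (a + c))
  = p * (normsq (c - b) - p / 4 * normsq (c + a - 2%:R * b)) - normsq b
    + p * (complex.Re (b^* * c) - normsq c) - p * (complex.Re (a^* * b) - normsq b).
Proof.
rewrite mulr_natl mulr2n.
case: a => a1 a2; case: b => b1 b2; case: c => c1 c2; rewrite /normsq /=.
by field; rewrite ?pnatr_eq0.
Qed.

Lemma trace_term_bound_real {R : realType} (p x y z : R) : 0 <= p <= 1 ->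
  ((2 - 2 * p) * y + p * (x + z)) ^+ 2 <= 6 * (x ^+ 2 + y ^+ 2 + z ^+ 2).
Proof.
move=> /andP[p0 p1]; set a := 2 - 2 * p.
(* Lagrange's identity, i.e. Cauchy-Schwarz for (a, p, p) against (y, x, z). *)
have lagrange : (a * y + p * (x + z)) ^+ 2
    + ((p * y - a * x) ^+ 2 + (p * z - p * x) ^+ 2 + (a * z - p * y) ^+ 2)
  = (a ^+ 2 + 2 * p ^+ 2) * (x ^+ 2 + y ^+ 2 + z ^+ 2) by ring.
have coef : a ^+ 2 + 2 * p ^+ 2 <= 6 by rewrite /a; nra.
have := sqr_ge0 (p * y - a * x); have := sqr_ge0 (p * z - p * x).
have := sqr_ge0 (a * z - p * y).
have := sqr_ge0 x; have := sqr_ge0 y; have := sqr_ge0 z.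
nra.
Qed.

Lemma trace_term_bound {R : realType} (p : R) (a b c : R[i]) : 0 <= p <= 1 ->
  normsq ((2 - 2 * p)%:C * b + p%:C * (a + c))
  <= 6 * (normsq a + normsq b + normsq c).
Proof.
move=> p01; case: a => a1 a2; case: b => b1 b2; case: c => c1 c2.
rewrite /normsq /= !mul0r !subr0 !addr0.
have := trace_term_bound_real p a1 b1 c1 p01.
have := trace_term_bound_real p a2 b2 c2 p01.
lra.
Qed.

Section TraceSeries.
Context {R : realType} {p : R} {beta : nat -> R[i]} {u : nat -> R}.
Hypothesis uS : forall n,
  u n.+1 = normsq ((2 - 2 * p)%:C * beta n.+1 + p%:C * (beta n + beta n.+2)).

Lemma trace_partial_sum N :
  1 - 4^-1 * \sum_(0 <= k < N.+1) u k =
    p * \sum_(1 <= k < N.+1) (normsq (beta k.+1 - beta k)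
           - p / 4 * normsq (beta k.+1 + beta k.-1 - 2%:R * beta k))
    + (normsq (beta 0%N) + p * (normsq (beta 1%N) - complex.Re (beta 0%N * (beta 1%N)^*))
       - 4^-1 * u 0%N)
    + (1 - \sum_(0 <= k < N.+1) normsq (beta k))
    + p * (complex.Re ((beta N)^* * beta N.+1) - normsq (beta N.+1)).
Proof.
elim: N => [|N IH].
  by rewrite !big_nat1 big_geq // Re_mul_conjC; lra.
rewrite !(big_nat_recr N.+1) //=.
have := normsq_trace_step p (beta N) (beta N.+1) (beta N.+2); rewrite -uS.
lra.
Qed.

Hypothesis p01 : 0 <= p <= 1.
Hypothesis u0_ge0 : 0 <= u 0%N.
Hypothesis beta_normalized : normalized beta.

Lemma cvg_trace_series : cvgn (fun N => \sum_(0 <= k < N) u k).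
Proof.
apply: nondecreasing_is_cvgn.
  by apply: nondecreasing_series => -[|n] _ _ //; rewrite uS normsq_ge0.
pose B N := \sum_(0 <= k < N) normsq (beta k).
have B_le1 N : B N <= 1 := normalized_partial_sum_le1 beta_normalized N.
have BS N : B N.+1 = B N + normsq (beta N) by rewrite /B big_nat_recr.
have B0 : B 0%N = 0 by rewrite /B big_geq.
have partial_le N : \sum_(0 <= k < N.+1) u k <= u 0%N + 6 * (B N + B N.+1 + B N.+2).
  elim: N => [|N IH].
    rewrite big_nat1 !BS B0.
    by have := normsq_ge0 (beta 0%N); have := normsq_ge0 (beta 1%N); lra.
  rewrite big_nat_recr //= uS.
  have := trace_term_bound p (beta N) (beta N.+1) (beta N.+2) p01.
  by have := BS N; have := BS N.+1; have := BS N.+2; lra.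
exists (u 0%N + 18) => _ [[|N] _ <-]; first by rewrite big_geq // addr_ge0.
apply: le_trans (partial_le N) _.
by have := B_le1 N; have := B_le1 N.+1; have := B_le1 N.+2; lra.
Qed.

Lemma trace_remainder_cvg0 :
  (fun N => (1 - \sum_(0 <= k < N.+1) normsq (beta k))
            + p * (complex.Re ((beta N)^* * beta N.+1) - normsq (beta N.+1)))
  @ \oo --> 0.
Proof.
have b_cvg0 := normalized_cvg0 beta_normalized.
have bS_cvg0 : (fun N => normsq (beta N.+1)) @ \oo --> 0.
  by rewrite (cvg_shiftS (fun N => normsq (beta N))).
have B_cvg1 : (fun N => \sum_(0 <= k < N.+1) normsq (beta k)) @ \oo --> (1 : R).
  by rewrite (cvg_shiftS (fun N => \sum_(0 <= k < N) normsq (beta k))).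
have Re_cvg0 : (fun N => complex.Re ((beta N)^* * beta N.+1)) @ \oo --> 0.
  apply: (@squeeze_cvgr _ _ _ _ (fun N => - (normsq (beta N) + normsq (beta N.+1)))
     (fun N => normsq (beta N) + normsq (beta N.+1))).
  - by apply: nearW => N; exact: Re_conj_mul_bound.
  - by rewrite -oppr0 -[0]addr0; apply: cvgN; apply: cvgD.
  - by rewrite -[0]addr0; apply: cvgD.
have rem_cvg := cvgD (cvgB (cvg_cst (1 : R)) B_cvg1) (cvgM (cvg_cst p) (cvgB Re_cvg0 bS_cvg0)).
by rewrite !subrr mulr0 addr0 in rem_cvg; exact: rem_cvg.
Qed.

Lemma trace_series_closed_form :
  1 - 4^-1 * rseries 0 u =
    p * rseries 1 (fun n => normsq (beta n.+1 - beta n)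
                   - p / 4 * normsq (beta n.+1 + beta n.-1 - 2%:R * beta n))
    + (normsq (beta 0%N) + p * (normsq (beta 1%N) - complex.Re (beta 0%N * (beta 1%N)^*))
       - 4^-1 * u 0%N).
Proof.
rewrite /rseries; set S := fun N => _; set Q := fun N => _; set D := (_ - _ * u 0%N).
have S_cvg : (fun N => S N.+1) @ \oo --> limn S.
  by rewrite (cvg_shiftS S); exact: cvg_trace_series.
have pQ_cvg : (fun N => p * Q N.+1) @ \oo --> 1 - 4^-1 * limn S - D.
  rewrite (_ : (fun N => p * Q N.+1) = fun N => 1 - 4^-1 * S N.+1 - D
      - ((1 - \sum_(0 <= k < N.+1) normsq (beta k))
         + p * (complex.Re ((beta N)^* * beta N.+1) - normsq (beta N.+1)))).
    rewrite -[X in _ --> X]subr0; apply: cvgB trace_remainder_cvg0.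
    by apply: cvgB (cvg_cst _); apply: cvgB (cvg_cst _) (cvgM (cvg_cst _) S_cvg).
  by apply/funext => N; rewrite /S /Q /D trace_partial_sum; lra.
move: pQ_cvg; rewrite (cvg_shiftS (fun N => p * Q N)) => /limn_scale ->.
lra.
Qed.

End TraceSeries.

Theorem mainTheorem5 (R : realType) (V : 'M[R[i]]_2) (beta : nat -> R[i]) :
  unitary2 V -> normalized beta ->
  choi_infidelity V beta =
    normsq (V 0 1) *
      rseries 1 (fun n => normsq (beta n.+1 - beta n)
                 - normsq (V 0 1) / 4
                   * normsq (beta n.+1 + beta n.-1 - 2%:R * beta n))
    + Delta V (beta 0%N) (beta 1%N).
Proof.
move=> V_unitary beta_normalized.
have [e10 e0011 p_le1] := unitary2_normsq V_unitary.
have p01 : 0 <= normsq (V 0 1) <= 1 by rewrite normsq_ge0.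
pose u n := normsq (\tr (adjmx V *m kraus V beta n)).
have uS n : u n.+1 = normsq ((2 - 2 * normsq (V 0 1))%:C * beta n.+1
                             + (normsq (V 0 1))%:C * (beta n + beta n.+2)).
  by rewrite /u trace_krausS e10 -e0011 [in RHS]rmorphD; congr normsq; ring.
have := trace_series_closed_form uS p01 (normsq_ge0 _) beta_normalized.
rewrite /choi_infidelity /Delta /u trace_kraus0 e10 => ->.
lra.
Qed.
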